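(* On an open subset of $\mathbb{R}^2$ where $c_3\mp(x^1+c_1)^2\mp(x^2+c_2)^2>0$, let $$\alpha=e^{\sigma(x)}\sqrt{(y^1)^2+(y^2)^2},\qquad \beta=e^{\sigma(x)}(\xi(x)y^1+\eta(x)y^2),$$ with $$\xi=\pm\frac{1}{\sqrt2}\frac{x^2+c_2}{\sqrt{c_3\mp(x^1+c_1)^2\mp(x^2+c_2)^2}},\quad \eta=\mp\frac{1}{\sqrt2}\frac{x^1+c_1}{\sqrt{c_3\mp(x^1+c_1)^2\mp(x^2+c_2)^2}},\quad \sigma=\ln\big[c_3\mp(x^1+c_1)^2\mp(x^2+c_2)^2\big]+c_4,$$ where $c_1,c_2,c_3,c_4$ are constants with $c_3>0$. Then $F=\alpha\pm\beta^2/\alpha$ is projectively flat and $\beta$ is not closed. (Upper signs throughout correspond to $F=\alpha+\beta^2/\alpha$, lower signs to $F=\alpha-\beta^2/\alpha$.)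
   Context: For a Riemannian metric $\alpha$ and a 1-form $\beta=b_iy^i$, $\beta$ is closed if $d\beta=0$, i.e. $s_{ij}=\frac12(b_{i|j}-b_{j|i})=0$. The spray coefficients of a Finsler metric $F$ are $G^i=\frac14 g^{il}\{[F^2]_{x^ky^l}y^k-[F^2]_{x^l}\}$ with $g_{ij}=\frac12[F^2]_{y^iy^j}$. $F$ is projectively flat on an open $U\subset\mathbb{R}^n$ if $G^i=P(x,y)y^i$ in the standard coordinates of $U$ for some function $P$. *)

From Stdlib Require Import Reals Lra ClassicalEpsilon.
Open Scope R_scope.

(* Functions on the tangent bundle T R^2 = R^2 x R^2, arguments (x1, x2, y1, y2). *)
Definition R4f := R -> R -> R -> R -> R.

(* Coordinates are indexed 0,1 (x^1, x^2) and 2,3 (y^1, y^2). *)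
Definition coord (k : nat) (x1 x2 y1 y2 : R) : R :=
  match k with 0 => x1 | 1 => x2 | 2 => y1 | _ => y2 end.

Definition along (f : R4f) (k : nat) (x1 x2 y1 y2 : R) : R -> R :=
  fun t => match k with
           | 0 => f t x2 y1 y2
           | 1 => f x1 t y1 y2
           | 2 => f x1 x2 t y2
           | _ => f x1 x2 y1 t
           end.

Definition hasPD (f : R4f) (k : nat) (x1 x2 y1 y2 : R) : Prop :=
  exists l, derivable_pt_lim (along f k x1 x2 y1 y2) (coord k x1 x2 y1 y2) l.

Definition pd (f : R4f) (k : nat) : R4f :=
  fun x1 x2 y1 y2 =>
    epsilon (inhabits 0)
      (fun l => derivable_pt_lim (along f k x1 x2 y1 y2) (coord k x1 x2 y1 y2) l).

Definition yv (k : nat) (y1 y2 : R) : R := match k with 0 => y1 | _ => y2 end.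

Section Spray.
Variable F : R4f.

Definition Lsq : R4f := fun x1 x2 y1 y2 => (F x1 x2 y1 y2) ^ 2.
Definition Ly (l : nat) : R4f := pd Lsq (2 + l).
Definition gmet (i j : nat) : R4f :=
  fun x1 x2 y1 y2 => / 2 * pd (Ly j) (2 + i) x1 x2 y1 y2.
Definition gdet : R4f := fun x1 x2 y1 y2 =>
  gmet 0 0 x1 x2 y1 y2 * gmet 1 1 x1 x2 y1 y2
  - gmet 0 1 x1 x2 y1 y2 * gmet 1 0 x1 x2 y1 y2.
Definition ginv (i l : nat) : R4f := fun x1 x2 y1 y2 =>
  match i, l with
  | 0, 0 => gmet 1 1 x1 x2 y1 y2 / gdet x1 x2 y1 y2
  | 0, _ => - gmet 0 1 x1 x2 y1 y2 / gdet x1 x2 y1 y2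
  | _, 0 => - gmet 1 0 x1 x2 y1 y2 / gdet x1 x2 y1 y2
  | _, _ => gmet 0 0 x1 x2 y1 y2 / gdet x1 x2 y1 y2
  end.
Definition sprayTerm (l : nat) : R4f := fun x1 x2 y1 y2 =>
  pd (Ly l) 0 x1 x2 y1 y2 * y1 + pd (Ly l) 1 x1 x2 y1 y2 * y2
  - pd Lsq l x1 x2 y1 y2.
Definition spray (i : nat) : R4f := fun x1 x2 y1 y2 =>
  / 4 * (ginv i 0 x1 x2 y1 y2 * sprayTerm 0 x1 x2 y1 y2
         + ginv i 1 x1 x2 y1 y2 * sprayTerm 1 x1 x2 y1 y2).

Definition spray_derivs_exist (x1 x2 y1 y2 : R) : Prop :=
  (forall k, (k < 4)%nat -> hasPD Lsq k x1 x2 y1 y2) /\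
  (forall l k, (l < 2)%nat -> (k < 4)%nat -> hasPD (Ly l) k x1 x2 y1 y2).
End Spray.

Definition open2 (U : R -> R -> Prop) : Prop :=
  forall x1 x2, U x1 x2 -> exists eps, 0 < eps /\
    forall z1 z2, Rabs (z1 - x1) < eps -> Rabs (z2 - x2) < eps -> U z1 z2.

Definition projectively_flat_on (F : R4f) (U : R -> R -> Prop) : Prop :=
  (forall x1 x2 y1 y2, U x1 x2 -> (y1, y2) <> (0, 0) ->
      spray_derivs_exist F x1 x2 y1 y2) /\
  exists P : R4f, forall x1 x2 y1 y2, U x1 x2 -> (y1, y2) <> (0, 0) ->
      gdet F x1 x2 y1 y2 <> 0 ->
      spray F 0 x1 x2 y1 y2 = P x1 x2 y1 y2 * y1 /\
      spray F 1 x1 x2 y1 y2 = P x1 x2 y1 y2 * y2.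

(* A 1-form beta = b1(x) dx^1 + b2(x) dx^2 on U is closed iff
   d beta = (d b2/dx^1 - d b1/dx^2) dx^1 /\ dx^2 vanishes on U. *)
Definition lift2 (b : R -> R -> R) : R4f := fun x1 x2 _ _ => b x1 x2.
Definition one_form_closed_on (b1 b2 : R -> R -> R) (U : R -> R -> Prop) : Prop :=
  forall x1 x2, U x1 x2 ->
    (forall k, (k < 2)%nat -> hasPD (lift2 b1) k x1 x2 0 0 /\ hasPD (lift2 b2) k x1 x2 0 0) /\
    pd (lift2 b2) 0 x1 x2 0 0 - pd (lift2 b1) 1 x1 x2 0 0 = 0.

(* The data of the theorem; s = 1 for the upper signs, s = -1 for the lower. *)
Definition Qf (s c1 c2 c3 : R) (x1 x2 : R) : R :=
  c3 - s * (x1 + c1) ^ 2 - s * (x2 + c2) ^ 2.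
Definition xi_f (s c1 c2 c3 : R) (x1 x2 : R) : R :=
  s * (/ sqrt 2) * ((x2 + c2) / sqrt (Qf s c1 c2 c3 x1 x2)).
Definition eta_f (s c1 c2 c3 : R) (x1 x2 : R) : R :=
  - s * (/ sqrt 2) * ((x1 + c1) / sqrt (Qf s c1 c2 c3 x1 x2)).
Definition sigma_f (s c1 c2 c3 c4 : R) (x1 x2 : R) : R :=
  ln (Qf s c1 c2 c3 x1 x2) + c4.
Definition alpha_f (s c1 c2 c3 c4 : R) : R4f := fun x1 x2 y1 y2 =>
  exp (sigma_f s c1 c2 c3 c4 x1 x2) * sqrt (y1 ^ 2 + y2 ^ 2).
Definition b1_f (s c1 c2 c3 c4 : R) (x1 x2 : R) : R :=
  exp (sigma_f s c1 c2 c3 c4 x1 x2) * xi_f s c1 c2 c3 x1 x2.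
Definition b2_f (s c1 c2 c3 c4 : R) (x1 x2 : R) : R :=
  exp (sigma_f s c1 c2 c3 c4 x1 x2) * eta_f s c1 c2 c3 x1 x2.
Definition beta_f (s c1 c2 c3 c4 : R) : R4f := fun x1 x2 y1 y2 =>
  b1_f s c1 c2 c3 c4 x1 x2 * y1 + b2_f s c1 c2 c3 c4 x1 x2 * y2.
Definition F_f (s c1 c2 c3 c4 : R) : R4f := fun x1 x2 y1 y2 =>
  alpha_f s c1 c2 c3 c4 x1 x2 y1 y2
  + s * (beta_f s c1 c2 c3 c4 x1 x2 y1 y2) ^ 2 / alpha_f s c1 c2 c3 c4 x1 x2 y1 y2.

From Stdlib Require Import Reals Lra Lia Nsatz ClassicalEpsilon.
From Coquelicot Require Import Coquelicot.
Open Scope R_scope.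

(* On U the data simplify: with K = e^(c4), Q = c3 -+ |x + c|^2, r = |y| and
   w = (x2 + c2) y1 - (x1 + c1) y2 one has alpha = K Q r and beta^2 = K^2 Q w^2 / 2,
   so F = K (Q r +- w^2 / (2 r)), a closed form whose first and second partial
   derivatives we write down explicitly.  Projective flatness then follows from
   Hamel's criterion: if F is positively 1-homogeneous in y (Euler identities for
   F and F_y) and F_{x^k y^l} y^k = F_{x^l}, the spray formula collapses to
   G^i = P y^i with P = F_{x^k} y^k / (2 F); this is a purely algebraic fact
   about the values of the derivatives at one point (lemma spray_radial).
   For beta = b_1 dx^1 + b_2 dx^2 one computes
     d b_2/dx^1 - d b_1/dx^2 = -+ K (2 c3 -+ 3 |x + c|^2) / (sqrt 2 sqrt Q),
   so closedness would force x + c onto a fixed circle on the open set U, which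
   is impossible. *)

Lemma pd_of_derivative (f : R4f) k x1 x2 y1 y2 l :
  derivable_pt_lim (along f k x1 x2 y1 y2) (coord k x1 x2 y1 y2) l ->
  hasPD f k x1 x2 y1 y2 /\ pd f k x1 x2 y1 y2 = l.
Proof.
intros hd; split; [exists l; exact hd|].
apply (uniqueness_limite _ _ _ _ (epsilon_spec (inhabits 0) _ (ex_intro _ l hd)) hd).
Qed.

Definition open4 (W : R -> R -> R -> R -> Prop) : Prop :=
  forall x1 x2 y1 y2, W x1 x2 y1 y2 -> exists e, 0 < e /\
    forall z1 z2 z3 z4, Rabs (z1 - x1) < e -> Rabs (z2 - x2) < e ->
      Rabs (z3 - y1) < e -> Rabs (z4 - y2) < e -> W z1 z2 z3 z4.

Lemma open4_and (W1 W2 : R -> R -> R -> R -> Prop) :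
  open4 W1 -> open4 W2 -> open4 (fun x1 x2 y1 y2 => W1 x1 x2 y1 y2 /\ W2 x1 x2 y1 y2).
Proof.
intros h1 h2 x1 x2 y1 y2 [w1 w2].
destruct (h1 _ _ _ _ w1) as [e1 [he1 hE1]]; destruct (h2 _ _ _ _ w2) as [e2 [he2 hE2]].
exists (Rmin e1 e2); split; [now apply Rmin_pos|].
intros z1 z2 z3 z4 a1 a2 a3 a4; split;
  [apply hE1 | apply hE2]; eapply Rlt_le_trans; eauto using Rmin_l, Rmin_r.
Qed.

Lemma open4_of_open2 (U : R -> R -> Prop) :
  open2 U -> open4 (fun x1 x2 _ _ => U x1 x2).
Proof.
intros hU x1 x2 y1 y2 hx; destruct (hU _ _ hx) as [e [he hE]].
exists e; split; [exact he|]; intros; now apply hE.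
Qed.

Lemma nonzero_near (a z : R) : Rabs (z - a) < Rabs a -> z <> 0.
Proof. intros h ->; rewrite Rminus_0_l, Rabs_Ropp in h; lra. Qed.

Lemma open4_nonzero_fibre : open4 (fun _ _ y1 y2 => 0 < y1 ^ 2 + y2 ^ 2).
Proof.
intros x1 x2 y1 y2 hy; destruct (Req_dec y1 0) as [h1|h1].
- assert (h2 : y2 <> 0) by (intros ->; subst; lra).
  exists (Rabs y2); split; [now apply Rabs_pos_lt|].
  intros z1 z2 z3 z4 _ _ _ a4; pose proof (nonzero_near _ _ a4); nra.
- exists (Rabs y1); split; [now apply Rabs_pos_lt|].
  intros z1 z2 z3 z4 _ _ a3 _; pose proof (nonzero_near _ _ a3); nra.
Qed.

Lemma derivable_pt_lim_local (f g : R -> R) x l e : 0 < e ->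
  (forall t, Rabs (t - x) < e -> f t = g t) ->
  derivable_pt_lim g x l -> derivable_pt_lim f x l.
Proof.
intros he hfg hd eps heps; destruct (hd eps heps) as [d hD].
assert (hm : 0 < Rmin d e) by (apply Rmin_pos; [apply cond_pos | exact he]).
exists (mkposreal _ hm); intros h hh hlt; simpl in hlt.
assert (hx : Rabs (x - x) < e) by (rewrite Rminus_diag, Rabs_R0; exact he).
assert (hxh : Rabs (x + h - x) < e)
  by (replace (x + h - x) with h by ring; eapply Rlt_le_trans; eauto using Rmin_r).
rewrite (hfg _ hx), (hfg _ hxh); apply hD; [exact hh|].
eapply Rlt_le_trans; eauto using Rmin_l.
Qed.

Lemma derivable_along_local (W : R -> R -> R -> R -> Prop) (f g : R4f) k x1 x2 y1 y2 l :
  open4 W -> W x1 x2 y1 y2 -> (forall z1 z2 z3 z4, W z1 z2 z3 z4 -> f z1 z2 z3 z4 = g z1 z2 z3 z4) ->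
  derivable_pt_lim (along g k x1 x2 y1 y2) (coord k x1 x2 y1 y2) l ->
  derivable_pt_lim (along f k x1 x2 y1 y2) (coord k x1 x2 y1 y2) l.
Proof.
intros hW hp hfg; destruct (hW _ _ _ _ hp) as [e [he hE]].
apply (derivable_pt_lim_local _ _ _ _ e he); intros t ht.
assert (z : forall a, Rabs (a - a) < e) by (intro a; rewrite Rminus_diag, Rabs_R0; exact he).
destruct k as [|[|[|k]]]; simpl in *; apply hfg, hE; auto.
Qed.

Lemma along_pointwise (h : R -> R -> R) (G H : R4f) k x1 x2 y1 y2 t :
  along (fun z1 z2 z3 z4 => h (G z1 z2 z3 z4) (H z1 z2 z3 z4)) k x1 x2 y1 y2 t
  = h (along G k x1 x2 y1 y2 t) (along H k x1 x2 y1 y2 t).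
Proof. now destruct k as [|[|[|k]]]. Qed.

Lemma along_at (G : R4f) k x1 x2 y1 y2 :
  along G k x1 x2 y1 y2 (coord k x1 x2 y1 y2) = G x1 x2 y1 y2.
Proof. now destruct k as [|[|[|k]]]. Qed.

Lemma derivable_along_product (G H : R4f) k x1 x2 y1 y2 a b c :
  derivable_pt_lim (along G k x1 x2 y1 y2) (coord k x1 x2 y1 y2) a ->
  derivable_pt_lim (along H k x1 x2 y1 y2) (coord k x1 x2 y1 y2) b ->
  derivable_pt_lim (along (fun z1 z2 z3 z4 => c * G z1 z2 z3 z4 * H z1 z2 z3 z4) k x1 x2 y1 y2)
    (coord k x1 x2 y1 y2) (c * (a * H x1 x2 y1 y2 + G x1 x2 y1 y2 * b)).
Proof.
intros ha hb.
pose proof (derivable_pt_lim_scal _ c _ _ (derivable_pt_lim_mult _ _ _ _ _ ha hb)) as hm.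
rewrite !along_at in hm.
eapply (derivable_pt_lim_local _ _ _ _ 1 Rlt_0_1); [|exact hm].
intros t _; unfold mult_real_fct, mult_fct.
rewrite (along_pointwise (fun u v => c * u * v)); ring.
Qed.

Lemma derivable_along_Lsq (G : R4f) k x1 x2 y1 y2 a :
  derivable_pt_lim (along G k x1 x2 y1 y2) (coord k x1 x2 y1 y2) a ->
  derivable_pt_lim (along (Lsq G) k x1 x2 y1 y2) (coord k x1 x2 y1 y2) (2 * G x1 x2 y1 y2 * a).
Proof.
intros ha.
replace (2 * G x1 x2 y1 y2 * a) with (1 * (a * G x1 x2 y1 y2 + G x1 x2 y1 y2 * a)) by ring.
refine (derivable_pt_lim_local _ _ _ _ 1 Rlt_0_1 _
         (derivable_along_product G G _ _ _ _ _ _ _ 1 ha ha)).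
intros t _; unfold Lsq; destruct k as [|[|[|k]]]; simpl; ring.
Qed.

(* Linear algebra behind Hamel's criterion: if g y = f v for a 2x2 matrix g, then
   (1/4) g^{-1} (2 D v) = D/(2 f) y; here v = F_y and g^{-1} is written via Cramer's rule. *)
Lemma inverse_metric_radial a b c d v1 v2 f D y1 y2 :
  f <> 0 -> a * d - b * c <> 0 ->
  a * y1 + b * y2 = f * v1 -> c * y1 + d * y2 = f * v2 ->
  / 4 * (d / (a * d - b * c) * (2 * v1 * D) + - b / (a * d - b * c) * (2 * v2 * D))
    = D / (2 * f) * y1 /\
  / 4 * (- c / (a * d - b * c) * (2 * v1 * D) + a / (a * d - b * c) * (2 * v2 * D))
    = D / (2 * f) * y2.
Proof.
intros hf hdet h1 h2.
assert (e1 : v1 = (a * y1 + b * y2) / f) by (rewrite h1; field; exact hf).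
assert (e2 : v2 = (c * y1 + d * y2) / f) by (rewrite h2; field; exact hf).
rewrite e1, e2; split; field; auto.
Qed.

(* Given the values f = F, df k = F_k and
   ddf l k = (F_{y^l})_k of the derivatives of F, Euler's identities for F and F_y
   and Hamel's identity F_{x^k y^l} y^k = F_{x^l} make the spray radial. *)
Lemma spray_radial (F : R4f) x1 x2 y1 y2 (f : R) (df : nat -> R) (ddf : nat -> nat -> R) :
  f <> 0 -> gdet F x1 x2 y1 y2 <> 0 ->
  (forall k, pd (Lsq F) k x1 x2 y1 y2 = 2 * f * df k) ->
  (forall l k, pd (Ly F l) k x1 x2 y1 y2 = 2 * (df k * df (2 + l)%nat + f * ddf l k)) ->
  df 2%nat * y1 + df 3%nat * y2 = f ->
  (forall i, (i < 2)%nat -> ddf 0%nat (2 + i)%nat * y1 + ddf 1%nat (2 + i)%nat * y2 = 0) ->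
  (forall l, (l < 2)%nat -> ddf l 0%nat * y1 + ddf l 1%nat * y2 = df l) ->
  spray F 0 x1 x2 y1 y2 = (df 0%nat * y1 + df 1%nat * y2) / (2 * f) * y1 /\
  spray F 1 x1 x2 y1 y2 = (df 0%nat * y1 + df 1%nat * y2) / (2 * f) * y2.
Proof.
intros hf hdet hL hLy euler euler_y hamel.
assert (contract : forall i, (i < 2)%nat ->
  gmet F i 0 x1 x2 y1 y2 * y1 + gmet F i 1 x1 x2 y1 y2 * y2 = f * df (2 + i)%nat).
{ intros i hi; unfold gmet; rewrite !hLy.
  transitivity (df (2 + i)%nat * (df 2%nat * y1 + df 3%nat * y2)
                + f * (ddf 0%nat (2 + i)%nat * y1 + ddf 1%nat (2 + i)%nat * y2)).
  - simpl; field.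
  - rewrite euler, (euler_y i hi); ring. }
assert (term : forall l, (l < 2)%nat ->
  sprayTerm F l x1 x2 y1 y2 = 2 * df (2 + l)%nat * (df 0%nat * y1 + df 1%nat * y2)).
{ intros l hl; unfold sprayTerm; rewrite !hLy, hL, <- (hamel l hl); ring. }
unfold spray, ginv; unfold gdet in hdet.
rewrite (term 0%nat), (term 1%nat) by lia.
apply inverse_metric_radial; [exact hf | exact hdet | |].
- apply (contract 0%nat); lia.
- apply (contract 1%nat); lia.
Qed.

Definition radius (y1 y2 : R) : R := sqrt (y1 ^ 2 + y2 ^ 2).
Definition wprod (c1 c2 x1 x2 y1 y2 : R) : R := (x2 + c2) * y1 - (x1 + c1) * y2.

Section ClosedForm.
Variables s c1 c2 c3 K : R.

(* The closed form of F on U (with K = e^(c4)) and its first and second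
   partial derivatives: dFcl k = F_k and ddFcl l k = (F_{y^l})_k, for y <> 0. *)
Definition Fcl : R4f := fun x1 x2 y1 y2 =>
  K * (Qf s c1 c2 c3 x1 x2 * radius y1 y2
       + s * wprod c1 c2 x1 x2 y1 y2 ^ 2 / (2 * radius y1 y2)).

Definition dFcl (k : nat) : R4f := fun x1 x2 y1 y2 =>
  let Q := Qf s c1 c2 c3 x1 x2 in let r := radius y1 y2 in
  let w := wprod c1 c2 x1 x2 y1 y2 in let u1 := x1 + c1 in let u2 := x2 + c2 in
  match k with
  | 0 => K * (-2 * s * u1 * r - s * w * y2 / r)
  | 1 => K * (-2 * s * u2 * r + s * w * y1 / r)
  | 2 => K * (Q * y1 / r + s * w * u2 / r - s * w ^ 2 * y1 / (2 * r ^ 3))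
  | _ => K * (Q * y2 / r - s * w * u1 / r - s * w ^ 2 * y2 / (2 * r ^ 3))
  end.

Definition ddFcl (l k : nat) : R4f := fun x1 x2 y1 y2 =>
  let Q := Qf s c1 c2 c3 x1 x2 in let r := radius y1 y2 in
  let w := wprod c1 c2 x1 x2 y1 y2 in let u1 := x1 + c1 in let u2 := x2 + c2 in
  match l, k with
  | 0, 0 => K * (-2 * s * u1 * y1 / r - s * u2 * y2 / r + s * w * y1 * y2 / r ^ 3)
  | 0, 1 => K * (-2 * s * u2 * y1 / r + s * (u2 * y1 + w) / r - s * w * y1 ^ 2 / r ^ 3)
  | 0, 2 => K * (Q * (1 / r - y1 ^ 2 / r ^ 3) + s * (u2 ^ 2 / r - w * u2 * y1 / r ^ 3)
                 - s * (2 * w * u2 * y1 + w ^ 2) / (2 * r ^ 3) + 3 * s * w ^ 2 * y1 ^ 2 / (2 * r ^ 5))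
  | 0, _ => K * (- Q * y1 * y2 / r ^ 3 + s * (- u1 * u2 / r - w * u2 * y2 / r ^ 3)
                 + s * w * u1 * y1 / r ^ 3 + 3 * s * w ^ 2 * y1 * y2 / (2 * r ^ 5))
  | _, 0 => K * (-2 * s * u1 * y2 / r + s * (u1 * y2 - w) / r + s * w * y2 ^ 2 / r ^ 3)
  | _, 1 => K * (-2 * s * u2 * y2 / r - s * u1 * y1 / r - s * w * y1 * y2 / r ^ 3)
  | _, 2 => K * (- Q * y1 * y2 / r ^ 3 - s * (u1 * u2 / r - w * u1 * y1 / r ^ 3)
                 - s * w * u2 * y2 / r ^ 3 + 3 * s * w ^ 2 * y1 * y2 / (2 * r ^ 5))
  | _, _ => K * (Q * (1 / r - y2 ^ 2 / r ^ 3) - s * (- u1 ^ 2 / r - w * u1 * y2 / r ^ 3)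
                 - s * (-2 * w * u1 * y2 + w ^ 2) / (2 * r ^ 3) + 3 * s * w ^ 2 * y2 ^ 2 / (2 * r ^ 5))
  end.

Ltac solve_derivative y1 y2 :=
  apply is_derive_Reals; unfold along, coord, Fcl, dFcl, ddFcl, Qf, radius, wprod;
  cbv beta iota zeta delta [Nat.add];
  assert (sqrt (y1 ^ 2 + y2 ^ 2) <> 0) by (apply Rgt_not_eq, sqrt_lt_R0; lra);
  auto_derive;
  [ repeat split; auto; cbn [pow] in *;
    repeat apply Rmult_integral_contrapositive_currified; auto; lra
  | cbn [pow] in *; field; auto ].

Lemma derivative_Fcl k x1 x2 y1 y2 : 0 < y1 ^ 2 + y2 ^ 2 ->
  derivable_pt_lim (along Fcl k x1 x2 y1 y2) (coord k x1 x2 y1 y2) (dFcl k x1 x2 y1 y2).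
Proof. intros h; destruct k as [|[|[|k]]]; solve_derivative y1 y2. Qed.

Lemma derivative_dFcl l k x1 x2 y1 y2 : 0 < y1 ^ 2 + y2 ^ 2 ->
  derivable_pt_lim (along (dFcl (2 + l)) k x1 x2 y1 y2) (coord k x1 x2 y1 y2)
    (ddFcl l k x1 x2 y1 y2).
Proof. intros h; destruct l as [|l], k as [|[|[|k]]]; solve_derivative y1 y2. Qed.

(* Polynomial identities in y1, y2 and r, modulo r^2 = y1^2 + y2^2. *)
Ltac solve_identity y1 y2 :=
  unfold Fcl, dFcl, ddFcl, Qf, radius, wprod; cbv beta iota zeta delta [Nat.add];
  let r := fresh "r" in
  assert (hr : sqrt (y1 ^ 2 + y2 ^ 2) * sqrt (y1 ^ 2 + y2 ^ 2) = y1 ^ 2 + y2 ^ 2)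
    by (apply sqrt_sqrt; lra);
  assert (hr0 : sqrt (y1 ^ 2 + y2 ^ 2) <> 0) by (apply Rgt_not_eq, sqrt_lt_R0; lra);
  set (r := sqrt (y1 ^ 2 + y2 ^ 2)) in *; clearbody r;
  field_simplify_eq; [cbn [pow] in *; nsatz | auto].

(* Euler's identity: F is 1-homogeneous in y. *)
Lemma euler_Fcl x1 x2 y1 y2 : 0 < y1 ^ 2 + y2 ^ 2 ->
  dFcl 2 x1 x2 y1 y2 * y1 + dFcl 3 x1 x2 y1 y2 * y2 = Fcl x1 x2 y1 y2.
Proof. intros h; solve_identity y1 y2. Qed.

(* Euler's identity for F_y, which is 0-homogeneous in y. *)
Lemma euler_dFcl i x1 x2 y1 y2 : 0 < y1 ^ 2 + y2 ^ 2 ->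
  ddFcl 0 (2 + i) x1 x2 y1 y2 * y1 + ddFcl 1 (2 + i) x1 x2 y1 y2 * y2 = 0.
Proof. intros h; destruct i as [|i]; solve_identity y1 y2. Qed.

Lemma hamel_Fcl l x1 x2 y1 y2 : (l < 2)%nat -> 0 < y1 ^ 2 + y2 ^ 2 ->
  ddFcl l 0 x1 x2 y1 y2 * y1 + ddFcl l 1 x1 x2 y1 y2 * y2 = dFcl l x1 x2 y1 y2.
Proof. intros hl h; destruct l as [|[|l]]; [solve_identity y1 y2 | solve_identity y1 y2 | lia]. Qed.

End ClosedForm.

Lemma sqrt_facts (a : R) : 0 < a -> sqrt a * sqrt a = a /\ sqrt a <> 0.
Proof. intros ha; split; [apply sqrt_sqrt; lra | apply Rgt_not_eq, sqrt_lt_R0, ha]. Qed.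

Lemma F_f_closed_form s c1 c2 c3 c4 x1 x2 y1 y2 :
  (s = 1 \/ s = -1) -> 0 < Qf s c1 c2 c3 x1 x2 ->
  F_f s c1 c2 c3 c4 x1 x2 y1 y2 = Fcl s c1 c2 c3 (exp c4) x1 x2 y1 y2.
Proof.
intros hs hQ.
unfold F_f, alpha_f, beta_f, b1_f, b2_f, xi_f, eta_f, sigma_f, Fcl, radius, wprod.
rewrite exp_plus, exp_ln by exact hQ.
assert (hss : s * s = 1) by (destruct hs; subst; ring).
set (Q := Qf s c1 c2 c3 x1 x2) in *.
destruct (sqrt_facts Q hQ) as [hq hq0].
destruct (sqrt_facts 2 ltac:(lra)) as [ht ht0].
assert (hK : exp c4 <> 0) by apply Rgt_not_eq, exp_pos.
destruct (Req_dec (sqrt (y1 ^ 2 + y2 ^ 2)) 0) as [h0|h0].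
- assert (y1 = 0 /\ y2 = 0) as [-> ->].
  { assert (y1 ^ 2 + y2 ^ 2 = 0) by (apply sqrt_eq_0; [nra | exact h0]); split; nra. }
  replace (0 ^ 2 + 0 ^ 2) with 0 by ring; rewrite sqrt_0; clearbody Q; unfold Rdiv; ring.
- set (r := sqrt (y1 ^ 2 + y2 ^ 2)) in *; set (q := sqrt Q) in *; set (t := sqrt 2) in *.
  set (K := exp c4) in *; clearbody r q t K Q.
  field_simplify_eq; [clear hs hQ; cbn [pow] in *; nsatz | repeat split; auto; lra].
Qed.

(* 2 Q |y|^2 +- w^2 > 0; for the lower sign this uses |w| <= |x + c| |y|. *)
Lemma Fcl_numerator_pos s c1 c2 c3 x1 x2 y1 y2 :
  (s = 1 \/ s = -1) -> 0 < c3 -> 0 < Qf s c1 c2 c3 x1 x2 -> 0 < y1 ^ 2 + y2 ^ 2 ->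
  0 < 2 * Qf s c1 c2 c3 x1 x2 * (y1 ^ 2 + y2 ^ 2) + s * wprod c1 c2 x1 x2 y1 y2 ^ 2.
Proof.
intros [-> | ->] hc hQ hy; unfold wprod.
- pose proof (pow2_ge_0 ((x2 + c2) * y1 - (x1 + c1) * y2)); nra.
- unfold Qf in *.
  replace (2 * (c3 - -1 * (x1 + c1) ^ 2 - -1 * (x2 + c2) ^ 2) * (y1 ^ 2 + y2 ^ 2)
           + -1 * ((x2 + c2) * y1 - (x1 + c1) * y2) ^ 2)
    with (2 * c3 * (y1 ^ 2 + y2 ^ 2) + ((x1 + c1) ^ 2 + (x2 + c2) ^ 2) * (y1 ^ 2 + y2 ^ 2)
          + ((x1 + c1) * y1 + (x2 + c2) * y2) ^ 2) by ring.
  pose proof (pow2_ge_0 ((x1 + c1) * y1 + (x2 + c2) * y2)).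
  pose proof (pow2_ge_0 (x1 + c1)); pose proof (pow2_ge_0 (x2 + c2)); nra.
Qed.

Lemma Fcl_pos s c1 c2 c3 K x1 x2 y1 y2 :
  (s = 1 \/ s = -1) -> 0 < c3 -> 0 < Qf s c1 c2 c3 x1 x2 -> 0 < y1 ^ 2 + y2 ^ 2 -> 0 < K ->
  0 < Fcl s c1 c2 c3 K x1 x2 y1 y2.
Proof.
intros hs hc hQ hy hK.
pose proof (Fcl_numerator_pos s c1 c2 c3 x1 x2 y1 y2 hs hc hQ hy) as hnum.
unfold Fcl, radius.
destruct (sqrt_facts _ hy) as [hr _]; pose proof (sqrt_lt_R0 _ hy) as hr0.
rewrite <- hr in hnum; set (r := sqrt (y1 ^ 2 + y2 ^ 2)) in *; clearbody r.
replace (K * (Qf s c1 c2 c3 x1 x2 * r + s * wprod c1 c2 x1 x2 y1 y2 ^ 2 / (2 * r)))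
  with (K / (2 * r) * (2 * Qf s c1 c2 c3 x1 x2 * (r * r) + s * wprod c1 c2 x1 x2 y1 y2 ^ 2))
  by (field; lra).
apply Rmult_lt_0_compat; [apply Rdiv_lt_0_compat; lra | exact hnum].
Qed.

Definition slit (U : R -> R -> Prop) (x1 x2 y1 y2 : R) : Prop :=
  U x1 x2 /\ 0 < y1 ^ 2 + y2 ^ 2.

Lemma open4_slit (U : R -> R -> Prop) : open2 U -> open4 (slit U).
Proof. intros hU; exact (open4_and _ _ (open4_of_open2 U hU) open4_nonzero_fibre). Qed.

Lemma slit_of_nonzero (U : R -> R -> Prop) x1 x2 y1 y2 :
  U x1 x2 -> (y1, y2) <> (0, 0) -> slit U x1 x2 y1 y2.
Proof.
intros hx hy; split; [exact hx|].
destruct (Req_dec y1 0) as [->|h1]; [destruct (Req_dec y2 0) as [->|h2]|]; [easy | nra | nra].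
Qed.

Section Derivatives.
Variables (s c1 c2 c3 c4 : R) (U : R -> R -> Prop).
Hypotheses (hs : s = 1 \/ s = -1) (hU : open2 U)
           (hQ : forall x1 x2, U x1 x2 -> 0 < Qf s c1 c2 c3 x1 x2).

Lemma Lsq_derivatives x1 x2 y1 y2 k : slit U x1 x2 y1 y2 ->
  hasPD (Lsq (F_f s c1 c2 c3 c4)) k x1 x2 y1 y2 /\
  pd (Lsq (F_f s c1 c2 c3 c4)) k x1 x2 y1 y2 =
    2 * Fcl s c1 c2 c3 (exp c4) x1 x2 y1 y2 * dFcl s c1 c2 c3 (exp c4) k x1 x2 y1 y2.
Proof.
intros hp; apply pd_of_derivative.
apply (derivable_along_local (slit U) _ (Lsq (Fcl s c1 c2 c3 (exp c4)))).
- exact (open4_slit U hU).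
- exact hp.
- intros z1 z2 z3 z4 [hz _]; unfold Lsq; now rewrite F_f_closed_form by auto.
- exact (derivable_along_Lsq _ _ _ _ _ _ _ (derivative_Fcl _ _ _ _ _ _ _ _ _ _ (proj2 hp))).
Qed.

Lemma Ly_derivatives x1 x2 y1 y2 l k : slit U x1 x2 y1 y2 ->
  hasPD (Ly (F_f s c1 c2 c3 c4) l) k x1 x2 y1 y2 /\
  pd (Ly (F_f s c1 c2 c3 c4) l) k x1 x2 y1 y2 =
    2 * (dFcl s c1 c2 c3 (exp c4) k x1 x2 y1 y2 * dFcl s c1 c2 c3 (exp c4) (2 + l) x1 x2 y1 y2
         + Fcl s c1 c2 c3 (exp c4) x1 x2 y1 y2 * ddFcl s c1 c2 c3 (exp c4) l k x1 x2 y1 y2).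
Proof.
intros hp; apply pd_of_derivative.
apply (derivable_along_local (slit U) _
         (fun z1 z2 z3 z4 => 2 * Fcl s c1 c2 c3 (exp c4) z1 z2 z3 z4
                               * dFcl s c1 c2 c3 (exp c4) (2 + l) z1 z2 z3 z4)).
- exact (open4_slit U hU).
- exact hp.
- intros z1 z2 z3 z4 hz; exact (proj2 (Lsq_derivatives z1 z2 z3 z4 (2 + l) hz)).
- apply derivable_along_product; [apply derivative_Fcl | apply derivative_dFcl]; exact (proj2 hp).
Qed.

End Derivatives.

Lemma projectively_flat_F s c1 c2 c3 c4 U :
  (s = 1 \/ s = -1) -> 0 < c3 -> open2 U ->
  (forall x1 x2, U x1 x2 -> 0 < Qf s c1 c2 c3 x1 x2) ->
  projectively_flat_on (F_f s c1 c2 c3 c4) U.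
Proof.
intros hs hc hU hQ; split.
- intros x1 x2 y1 y2 hx hy; pose proof (slit_of_nonzero U _ _ _ _ hx hy) as hp; split.
  + intros k _; exact (proj1 (Lsq_derivatives s c1 c2 c3 c4 U hs hU hQ _ _ _ _ k hp)).
  + intros l k _ _; exact (proj1 (Ly_derivatives s c1 c2 c3 c4 U hs hU hQ _ _ _ _ l k hp)).
- exists (fun x1 x2 y1 y2 =>
    (dFcl s c1 c2 c3 (exp c4) 0 x1 x2 y1 y2 * y1 + dFcl s c1 c2 c3 (exp c4) 1 x1 x2 y1 y2 * y2)
    / (2 * Fcl s c1 c2 c3 (exp c4) x1 x2 y1 y2)).
  intros x1 x2 y1 y2 hx hy hdet.
  pose proof (slit_of_nonzero U _ _ _ _ hx hy) as hp.
  apply (spray_radial _ _ _ _ _ (Fcl s c1 c2 c3 (exp c4) x1 x2 y1 y2)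
           (fun k => dFcl s c1 c2 c3 (exp c4) k x1 x2 y1 y2)
           (fun l k => ddFcl s c1 c2 c3 (exp c4) l k x1 x2 y1 y2)).
  + apply Rgt_not_eq, Fcl_pos; [exact hs | exact hc | exact (hQ _ _ hx) | exact (proj2 hp) | apply exp_pos].
  + exact hdet.
  + intro k; exact (proj2 (Lsq_derivatives s c1 c2 c3 c4 U hs hU hQ _ _ _ _ k hp)).
  + intros l k; exact (proj2 (Ly_derivatives s c1 c2 c3 c4 U hs hU hQ _ _ _ _ l k hp)).
  + exact (euler_Fcl _ _ _ _ _ _ _ _ _ (proj2 hp)).
  + intros i _; exact (euler_dFcl _ _ _ _ _ _ _ _ _ _ (proj2 hp)).
  + intros l hl; exact (hamel_Fcl _ _ _ _ _ _ _ _ _ _ hl (proj2 hp)).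
Qed.

Lemma beta_coefficients s c1 c2 c3 c4 x1 x2 : 0 < Qf s c1 c2 c3 x1 x2 ->
  b1_f s c1 c2 c3 c4 x1 x2 = exp c4 * s / sqrt 2 * (x2 + c2) * sqrt (Qf s c1 c2 c3 x1 x2) /\
  b2_f s c1 c2 c3 c4 x1 x2 = - exp c4 * s / sqrt 2 * (x1 + c1) * sqrt (Qf s c1 c2 c3 x1 x2).
Proof.
intros hQ; unfold b1_f, b2_f, xi_f, eta_f, sigma_f; rewrite exp_plus, exp_ln by exact hQ.
destruct (sqrt_facts _ hQ) as [hq hq0]; destruct (sqrt_facts 2 ltac:(lra)) as [_ ht0].
set (q := sqrt (Qf s c1 c2 c3 x1 x2)) in *; set (Q := Qf s c1 c2 c3 x1 x2) in *.
clearbody q Q; rewrite <- hq; split; field; auto.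
Qed.

Section ExteriorDerivative.
Variables (s c1 c2 c3 c4 : R) (U : R -> R -> Prop).
Hypotheses (hs : s = 1 \/ s = -1) (hU : open2 U)
           (hQ : forall x1 x2, U x1 x2 -> 0 < Qf s c1 c2 c3 x1 x2).

Ltac solve_coefficient_derivative :=
  apply is_derive_Reals; unfold along, coord, lift2, Qf in *; cbv beta iota;
  match goal with h : 0 < ?Q |- _ =>
    let hsq := fresh "hsq" in let hsq0 := fresh "hsq0" in
    destruct (sqrt_facts _ h) as [hsq hsq0];
    assert (ht0 : sqrt 2 <> 0) by exact (proj2 (sqrt_facts 2 ltac:(lra)));
    auto_derive; [lra |];
    field_simplify_eq; [cbn [pow] in *; nsatz | repeat split; auto] end.

Lemma derivative_b2_x1 x1 x2 : U x1 x2 ->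
  derivable_pt_lim (along (lift2 (b2_f s c1 c2 c3 c4)) 0 x1 x2 0 0) (coord 0 x1 x2 0 0)
    (- exp c4 * s / sqrt 2 * (Qf s c1 c2 c3 x1 x2 - s * (x1 + c1) ^ 2)
     / sqrt (Qf s c1 c2 c3 x1 x2)).
Proof.
intros hx; pose proof (hQ _ _ hx) as hq.
apply (derivable_along_local (fun z1 z2 _ _ => U z1 z2) _
  (fun z1 z2 _ _ => - exp c4 * s / sqrt 2 * (z1 + c1) * sqrt (Qf s c1 c2 c3 z1 z2))).
- exact (open4_of_open2 U hU).
- exact hx.
- intros z1 z2 z3 z4 hz; exact (proj2 (beta_coefficients _ _ _ _ c4 _ _ (hQ _ _ hz))).
- solve_coefficient_derivative.
Qed.

Lemma derivative_b1_x2 x1 x2 : U x1 x2 ->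
  derivable_pt_lim (along (lift2 (b1_f s c1 c2 c3 c4)) 1 x1 x2 0 0) (coord 1 x1 x2 0 0)
    (exp c4 * s / sqrt 2 * (Qf s c1 c2 c3 x1 x2 - s * (x2 + c2) ^ 2)
     / sqrt (Qf s c1 c2 c3 x1 x2)).
Proof.
intros hx; pose proof (hQ _ _ hx) as hq.
apply (derivable_along_local (fun z1 z2 _ _ => U z1 z2) _
  (fun z1 z2 _ _ => exp c4 * s / sqrt 2 * (z2 + c2) * sqrt (Qf s c1 c2 c3 z1 z2))).
- exact (open4_of_open2 U hU).
- exact hx.
- intros z1 z2 z3 z4 hz; exact (proj1 (beta_coefficients _ _ _ _ c4 _ _ (hQ _ _ hz))).
- solve_coefficient_derivative.
Qed.

Lemma exterior_derivative_beta x1 x2 : U x1 x2 ->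
  pd (lift2 (b2_f s c1 c2 c3 c4)) 0 x1 x2 0 0 - pd (lift2 (b1_f s c1 c2 c3 c4)) 1 x1 x2 0 0
  = - exp c4 * s / sqrt 2 * (2 * c3 - 3 * s * ((x1 + c1) ^ 2 + (x2 + c2) ^ 2))
    / sqrt (Qf s c1 c2 c3 x1 x2).
Proof.
intros hx.
rewrite (proj2 (pd_of_derivative _ _ _ _ _ _ _ (derivative_b2_x1 x1 x2 hx))),
        (proj2 (pd_of_derivative _ _ _ _ _ _ _ (derivative_b1_x2 x1 x2 hx))).
destruct (sqrt_facts _ (hQ _ _ hx)) as [_ hq0]; destruct (sqrt_facts 2 ltac:(lra)) as [_ ht0].
assert (hss : s * s = 1) by (destruct hs; subst; ring).
unfold Qf in *; field_simplify_eq; [cbn [pow] in *; nsatz | auto].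
Qed.

Lemma closed_on_circle x1 x2 : U x1 x2 ->
  pd (lift2 (b2_f s c1 c2 c3 c4)) 0 x1 x2 0 0 - pd (lift2 (b1_f s c1 c2 c3 c4)) 1 x1 x2 0 0 = 0 ->
  3 * s * ((x1 + c1) ^ 2 + (x2 + c2) ^ 2) = 2 * c3.
Proof.
intros hx h0; rewrite exterior_derivative_beta in h0 by exact hx.
destruct (sqrt_facts _ (hQ _ _ hx)) as [_ hq0]; destruct (sqrt_facts 2 ltac:(lra)) as [_ ht0].
pose proof (exp_pos c4) as hK; assert (hs0 : s <> 0) by (destruct hs; lra).
unfold Rdiv in h0; apply Rmult_integral in h0 as [h0 | h0];
  [| exfalso; exact (Rinv_neq_0_compat _ hq0 h0)].
apply Rmult_integral in h0 as [h0 | h0]; [exfalso | lra].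
revert h0; apply Rmult_integral_contrapositive_currified; [| exact (Rinv_neq_0_compat _ ht0)].
apply Rmult_integral_contrapositive_currified; [lra | exact hs0].
Qed.

End ExteriorDerivative.

Lemma square_not_locally_constant u h : h <> 0 ->
  (u + h) ^ 2 = u ^ 2 -> (u - h) ^ 2 = u ^ 2 -> False.
Proof. intros hh e1 e2; apply hh; nra. Qed.

(* Second half of the theorem: the open set U contains a horizontal segment
   around any of its points, which cannot lie on a circle. *)
Lemma beta_not_closed s c1 c2 c3 c4 U :
  (s = 1 \/ s = -1) -> open2 U -> (exists x1 x2, U x1 x2) ->
  (forall x1 x2, U x1 x2 -> 0 < Qf s c1 c2 c3 x1 x2) ->
  ~ one_form_closed_on (b1_f s c1 c2 c3 c4) (b2_f s c1 c2 c3 c4) U.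
Proof.
intros hs hU [a1 [a2 ha]] hQ hclosed; destruct (hU a1 a2 ha) as [e [he hE]].
assert (circle : forall d, Rabs d < e ->
  3 * s * ((a1 + d + c1) ^ 2 + (a2 + c2) ^ 2) = 2 * c3).
{ intros d hd.
  assert (hx : U (a1 + d) a2).
  { apply hE; [replace (a1 + d - a1) with d by ring; exact hd |].
    rewrite Rminus_diag, Rabs_R0; exact he. }
  exact (closed_on_circle s c1 c2 c3 c4 U hs hU hQ _ _ hx (proj2 (hclosed _ _ hx))). }
assert (hs0 : s <> 0) by (destruct hs; lra).
pose proof (circle 0 ltac:(rewrite Rabs_R0; exact he)) as e0.
pose proof (circle (e / 2) ltac:(rewrite Rabs_right; lra)) as ep.
pose proof (circle (- (e / 2)) ltac:(rewrite Rabs_Ropp, Rabs_right; lra)) as em.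
apply (square_not_locally_constant (a1 + c1) (e / 2)); [lra | |].
- apply (Rmult_eq_reg_l (3 * s)); [| lra].
  replace (a1 + c1 + e / 2) with (a1 + e / 2 + c1) by ring; rewrite Rplus_0_r in e0; nra.
- apply (Rmult_eq_reg_l (3 * s)); [| lra].
  replace (a1 + c1 - e / 2) with (a1 + - (e / 2) + c1) by ring; rewrite Rplus_0_r in e0; nra.
Qed.

Theorem mainTheorem4 (s c1 c2 c3 c4 : R) (U : R -> R -> Prop) :
  (s = 1 \/ s = -1) ->
  0 < c3 ->
  open2 U ->
  (exists x1 x2, U x1 x2) ->
  (forall x1 x2, U x1 x2 -> 0 < Qf s c1 c2 c3 x1 x2) ->
  projectively_flat_on (F_f s c1 c2 c3 c4) U /\
  ~ one_form_closed_on (b1_f s c1 c2 c3 c4) (b2_f s c1 c2 c3 c4) U.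
Proof.
intros hs hc hU hne hQ; split.
- exact (projectively_flat_F s c1 c2 c3 c4 U hs hc hU hQ).
- exact (beta_not_closed s c1 c2 c3 c4 U hs hU hne hQ).
Qed.
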